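(* Let $\Sigma\in\mathbb{R}^{N\times N}$ be symmetric positive definite, $\mu\in\mathbb{R}^N$, $\gamma\in[0,1]$, and $\mathcal T$ a balanced binary tree whose leaves are the assets $1,\dots,N$. Then the HRP-$\Sigma\mu$ algorithm runs in $O(N^2)$ time and $O(N^2)$ space, the space being dominated by storing $\Sigma$.
   Context: HRP-$\Sigma\mu$ algorithm (inputs $\Sigma,\mu,\mathcal T,\gamma$), defined recursively. At a leaf (asset $i$) return $\hat w=(1)$, $v=\Sigma_{ii}$, $s=\mu_i$. At an internal node $n$ with left and right subtrees having leaf index sets $L,R$: recursively obtain $(\hat w_L,v_L,s_L)$ and $(\hat w_R,v_R,s_R)$; compute $c=\hat w_L^\top\Sigma_{LR}\hat w_R$, $\Delta=v_Lv_R-\gamma^2c^2$, $\alpha_L^{\mathrm{raw}}=(v_Rs_L-\gamma cs_R)/\Delta$, $\alpha_R^{\mathrm{raw}}=(v_Ls_R-\gamma cs_L)/\Delta$, $Z=|\alpha_L^{\mathrm{raw}}|+|\alpha_R^{\mathrm{raw}}|$, $\alpha_k=\alpha_k^{\mathrm{raw}}/Z$; the node representative is the stacked vector $\hat w_n=(\alpha_L\hat w_L,\alpha_R\hat w_R)\in\mathbb{R}^{L\cup R}$, with $v_n=\hat w_n^\top\Sigma_{nn}\hat w_n$ and $s_n=\hat w_n^\top\mu_n$. The output is the representative at the root. Time is counted in arithmetic operations on real numbers; a balanced binary tree has depth $O(\log N)$ with the leaves split as evenly as possible at every node. *)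

From HB Require Import structures.
From mathcomp Require Import all_boot all_order all_algebra.
From mathcomp Require Import reals.

Set Implicit Arguments.
Unset Strict Implicit.
Unset Printing Implicit Defensive.

Import Order.TTheory GRing.Theory Num.Theory.
Local Open Scope ring_scope.

(* Cost model: a state monad counting                                       *)
(*   - ops  : number of arithmetic operations on reals performed so far     *)
(*   - cur  : number of reals currently stored in the working memory        *)
(*   - peak : maximum of cur over the run (auxiliary space)                 *)
(* Every arithmetic operation (+, -, *, /, |.|) costs one tick.  Named      *)
(* intermediate results (vectors, scalars) are explicitly allocated and     *)
(* freed.  The inputs Sigma (N*N reals) and mu (N reals) are accounted for  *)
(* separately in [hrp_space].                                               *)

Record cstate := CState { ops : nat; cur : nat; peak : nat }.

Definition CM (A : Type) := cstate -> A * cstate.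

Definition cret {A} (a : A) : CM A := fun s => (a, s).
Definition cbind {A B} (m : CM A) (k : A -> CM B) : CM B :=
  fun s => let (a, s') := m s in k a s'.

Notation "x <- m ;; k" := (cbind m (fun x => k))
  (at level 61, m at next level, right associativity).

Definition tick : CM unit :=
  fun s => (tt, CState (ops s).+1 (cur s) (peak s)).
Definition alloc (k : nat) : CM unit :=
  fun s => (tt, CState (ops s) (cur s + k)%N (maxn (peak s) (cur s + k))).
Definition free (k : nat) : CM unit :=
  fun s => (tt, CState (ops s) (cur s - k)%N (peak s)).

Section HRP.
Variable R : realFieldType.

Definition addM (x y : R) : CM R := _ <- tick ;; cret (x + y).
Definition subM (x y : R) : CM R := _ <- tick ;; cret (x - y).
Definition mulM (x y : R) : CM R := _ <- tick ;; cret (x * y).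
Definition divM (x y : R) : CM R := _ <- tick ;; cret (x / y).
Definition absM (x : R) : CM R := _ <- tick ;; cret `|x|.

Fixpoint sumM {A} (f : A -> CM R) (xs : seq A) : CM R :=
  match xs with
  | [::] => cret 0
  | x :: xs' => a <- f x ;; b <- sumM f xs' ;; addM a b
  end.

Fixpoint mapM {A B} (f : A -> CM B) (xs : seq A) : CM (seq B) :=
  match xs with
  | [::] => cret [::]
  | x :: xs' => y <- f x ;; ys <- mapM f xs' ;; cret (y :: ys)
  end.

Variable N : nat.

(* A sparse representative: list of (asset, weight); a vector in R^{leaves}. *)
Definition rep := seq ('I_N * R).

Definition bilinM (Sigma : 'M[R]_N) (u w : rep) : CM R :=
  sumM (fun p => t <- sumM (fun q => mulM (Sigma p.1 q.1) q.2) w ;; mulM p.2 t) u.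

Definition dotM (mu : 'cV[R]_N) (w : rep) : CM R :=
  sumM (fun p => mulM p.2 (mu p.1 ord0)) w.

Definition scaleM (a : R) (w : rep) : CM rep :=
  mapM (fun p => y <- mulM a p.2 ;; cret (p.1, y)) w.

End HRP.

Inductive tree (N : nat) : Type :=
| Leaf of 'I_N
| Node of tree N & tree N.
Arguments Leaf {N}.
Arguments Node {N}.

Fixpoint leaves {N} (t : tree N) : seq 'I_N :=
  match t with
  | Leaf i => [:: i]
  | Node l r => leaves l ++ leaves r
  end.

Fixpoint balanced {N} (t : tree N) : bool :=
  match t with
  | Leaf _ => true
  | Node l r =>
      [&& balanced l, balanced r,
          (size (leaves l) <= (size (leaves r)).+1)%N &
          (size (leaves r) <= (size (leaves l)).+1)%N]
  end.

Section HRPalg.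
Variables (R : realFieldType) (N : nat).
Variables (Sigma : 'M[R]_N) (mu : 'cV[R]_N) (gamma : R).

Fixpoint hrp (t : tree N) : CM (rep R N * R * R) :=
  match t with
  | Leaf i => _ <- alloc 3 ;; cret ([:: (i, 1)], Sigma i i, mu i ord0)
  | Node l r =>
      resL <- hrp l ;;
      resR <- hrp r ;;
      let '(wL, vL, sL) := resL in
      let '(wR, vR, sR) := resR in
      c <- bilinM Sigma wL wR ;; _ <- alloc 1 ;;
      g2 <- mulM gamma gamma ;; cc <- mulM c c ;; g2cc <- mulM g2 cc ;;
      vv <- mulM vL vR ;; Delta <- subM vv g2cc ;; _ <- alloc 1 ;;
      gc <- mulM gamma c ;;
      t1 <- mulM vR sL ;; t2 <- mulM gc sR ;; d1 <- subM t1 t2 ;;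
      aLr <- divM d1 Delta ;; _ <- alloc 1 ;;
      t3 <- mulM vL sR ;; t4 <- mulM gc sL ;; d2 <- subM t3 t4 ;;
      aRr <- divM d2 Delta ;; _ <- alloc 1 ;;
      z1 <- absM aLr ;; z2 <- absM aRr ;; Z <- addM z1 z2 ;; _ <- alloc 1 ;;
      aL <- divM aLr Z ;; aR <- divM aRr Z ;; _ <- alloc 2 ;;
      wL' <- scaleM aL wL ;; wR' <- scaleM aR wR ;;
      _ <- alloc (size wL + size wR) ;;
      let wn := wL' ++ wR' in
      vn <- bilinM Sigma wn wn ;; sn <- dotM mu wn ;; _ <- alloc 2 ;;
      _ <- free ((size wL + 2) + (size wR + 2) + 7) ;;
      cret (wn, vn, sn)
  end.

Definition hrp_run (T : tree N) := hrp T (CState 0 0 0).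

Definition hrp_time (T : tree N) : nat := ops (hrp_run T).2.
Definition hrp_aux_space (T : tree N) : nat := peak (hrp_run T).2.
Definition hrp_space (T : tree N) : nat := (N * N + N + hrp_aux_space T)%N.

End HRPalg.

From mathcomp Require Import all_boot all_algebra.
From mathcomp Require Import reals.
From mathcomp Require Import zify.

Set Implicit Arguments.
Unset Strict Implicit.
Unset Printing Implicit Defensive.

(* At a node splitting its leaves into a and b, the algorithm performs
   O((a + b)^2) operations, dominated by recomputing v_n; in a balanced tree
   (a + b)^2 <= 4ab + 1, so the work at the node is O(ab).  Since
   (a + b)^2 = a^2 + b^2 + 2ab, a bound C ab per node adds up to C n^2 / 2 over
   the whole tree (the products ab count pairs of leaves by their lowest common
   ancestor).  Besides O(n) temporaries of the current node, the working memory
   only holds the outputs (n_i + 2 numbers) of finished subtrees with disjoint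
   leaf sets, hence O(N); Sigma accounts for the N^2 in the space bound. *)

Definition costs {A} (m : CM A) (k : nat) (P : A -> Prop) :=
  exists2 a, P a & forall s, m s = (a, CState (ops s + k) (cur s) (peak s)).

Lemma costs_ret {A} (P : A -> Prop) (a : A) : P a -> costs (cret a) 0 P.
Proof. by exists a => // -[o c p]; rewrite addn0. Qed.

Lemma costs_bind {A B} (m : CM A) (f : A -> CM B) k j P Q :
  costs m k P -> (forall a, P a -> costs (f a) j Q) -> costs (cbind m f) (k + j) Q.
Proof.
move=> [a Pa mE] fQ; have [b Qb fE] := fQ a Pa.
by exists b => // s; rewrite /cbind mE fE /= addnA.
Qed.

Lemma costs_tick {A} (a : A) : costs (_ <- tick ;; cret a) 1 xpredT.
Proof. by exists a => // s; rewrite addn1. Qed.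

Lemma costs_sumM {R : realFieldType} {A} (f : A -> CM R) k xs :
  (forall x, costs (f x) k xpredT) -> costs (sumM f xs) (k.+1 * size xs) xpredT.
Proof.
move=> fk; elim: xs => [|x xs IH] /=; first by rewrite muln0; apply: costs_ret.
have -> : (k.+1 * (size xs).+1 = k + (k.+1 * size xs + 1))%N by lia.
by apply: costs_bind (fk x) _ => a _; apply: costs_bind IH _ => b _; apply: costs_tick.
Qed.

Lemma costs_mapM {A B} (f : A -> CM B) k xs :
  (forall x, costs (f x) k xpredT) ->
  costs (mapM f xs) (k * size xs) (fun ys => size ys = size xs).
Proof.
move=> fk; elim: xs => [|x xs IH] /=; first by rewrite muln0; apply: costs_ret.
have -> : (k * (size xs).+1 = k + (k * size xs + 0))%N by lia.
apply: costs_bind (fk x) _ => y _; apply: costs_bind IH _ => ys ysE.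
by apply: costs_ret; rewrite /= ysE.
Qed.

Section CostsVectorOps.
Variables (R : realFieldType) (N : nat).

Lemma costs_bilinM (S : 'M[R]_N) (u w : rep R N) :
  costs (bilinM S u w) ((2 * size w + 2) * size u) xpredT.
Proof.
have -> : (2 * size w + 2 = (2 * size w + 1).+1)%N by lia.
rewrite /bilinM; apply: costs_sumM => p.
apply: (@costs_bind _ _ _ _ (2 * size w)) => [|t _]; last exact: costs_tick.
exact: costs_sumM (fun q => costs_tick _).
Qed.

Lemma costs_dotM (mu : 'cV[R]_N) (w : rep R N) : costs (dotM mu w) (2 * size w) xpredT.
Proof. exact: costs_sumM (fun p => costs_tick _). Qed.

Lemma costs_scaleM (a : R) (w : rep R N) :
  costs (scaleM a w) (size w) (fun v => size v = size w).
Proof.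
rewrite /scaleM -{1}[size w]mul1n; apply: costs_mapM => p.
by apply: costs_bind (costs_tick _) _ => y _; apply: costs_ret.
Qed.

End CostsVectorOps.

(* Computing c, the 19 scalar operations, rescaling the two halves, then v_n and s_n. *)
Definition node_ops (a b : nat) : nat :=
  (2 * b + 2) * a + 19 + (a + b) + (2 * (a + b) + 2) * (a + b) + 2 * (a + b).

Fixpoint hrp_ops {N} (t : tree N) : nat :=
  match t with
  | Leaf _ => 0
  | Node l r => hrp_ops l + hrp_ops r + node_ops (size (leaves l)) (size (leaves r))
  end.

Lemma leaves_gt0 {N} (t : tree N) : 0 < size (leaves t).
Proof. by elim: t => [//|l IHl r IHr]; rewrite size_cat addn_gt0 IHl. Qed.

Lemma sqrnD_balanced (a b : nat) :
  a <= b.+1 -> b <= a.+1 -> (a + b) ^ 2 <= 4 * (a * b) + 1.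
Proof. nia. Qed.

Lemma node_ops_balanced (a b : nat) :
  0 < a -> 0 < b -> a <= b.+1 -> b <= a.+1 -> node_ops a b <= 44 * (a * b).
Proof.
move=> a_gt0 b_gt0 ab ba; have := sqrnD_balanced ab ba.
rewrite /node_ops; nia.
Qed.

Lemma hrp_ops_balanced {N} (t : tree N) :
  balanced t -> hrp_ops t <= 22 * size (leaves t) ^ 2.
Proof.
elim: t => [//|l IHl r IHr] /= /and4P[/IHl opsl /IHr opsr lr rl].
have := node_ops_balanced (leaves_gt0 l) (leaves_gt0 r) lr rl.
rewrite size_cat; nia.
Qed.

Section HrpCost.
Variables (R : realFieldType) (N : nat) (Sigma : 'M[R]_N) (mu : 'cV[R]_N) (gamma : R).
Local Notation hrp := (hrp Sigma mu gamma).

Lemma hrp_Node_cost l r s :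
  let: (resL, s1) := hrp l s in
  let: (resR, s2) := hrp r s1 in
  let: (res, s') := hrp (Node l r) s in
  let a := size resL.1.1 in let b := size resR.1.1 in
  [/\ size res.1.1 = a + b, ops s' = ops s2 + node_ops a b,
      cur s' = cur s2 - 2 & peak s' = maxn (peak s2) (cur s2 + (a + b + 9))].
Proof.
rewrite /= /cbind; case: (hrp l s) => [[[wL vL] sL] s1].
case: (hrp r s1) => [[[wR vR] sR] s2].
have [c _ ->] := costs_bilinM Sigma wL wR; rewrite /=.
set aL := (X in scaleM X wL); set aR := (X in scaleM X wR).
have [wL' wL'E ->] := costs_scaleM aL wL; have [wR' wR'E ->] := costs_scaleM aR wR.
have [v _ ->] := costs_bilinM Sigma (wL' ++ wR') (wL' ++ wR').
have [x _ ->] := costs_dotM mu (wL' ++ wR').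
rewrite /= !size_cat wL'E wR'E /node_ops; split; lia.
Qed.

Lemma hrp_cost t s :
  let: (res, s') := hrp t s in
  [/\ size res.1.1 = size (leaves t), ops s' = ops s + hrp_ops t,
      cur s' = cur s + size (leaves t) + 2
    & peak s' <= maxn (peak s) (cur s + 4 * size (leaves t) + 13)].
Proof.
elim: t s => [i|l IHl r IHr] s; first by split=> //=; lia.
have := hrp_Node_cost l r s.
have := IHl s; case: (hrp l s) => [resL s1] [szL opsL curL peakL].
have := IHr s1; case: (hrp r s1) => [resR s2] [szR opsR curR peakR].
case: (hrp (Node l r) s) => [res s'].
have := leaves_gt0 l.
rewrite szL szR /= size_cat => nL_gt0 [-> -> -> ->]; split=> //; lia.
Qed.

End HrpCost.

Local Open Scope ring_scope.

Theorem mainTheorem16 :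
  exists C : nat,
  forall (R : realType) (N : nat) (Sigma : 'M[R]_N) (mu : 'cV[R]_N)
         (gamma : R) (T : tree N),
    Sigma^T = Sigma ->
    (forall x : 'cV[R]_N, x != 0 -> 0 < (x^T *m Sigma *m x) ord0 ord0) ->
    0 <= gamma <= 1 ->
    balanced T ->
    perm_eq (leaves T) (enum 'I_N) ->
    [/\ (hrp_time Sigma mu gamma T <= C * N ^ 2)%N,
        (hrp_space Sigma mu gamma T <= C * N ^ 2)%N &
        (hrp_aux_space Sigma mu gamma T <= C * N)%N].
Proof.
exists 22%N => R N Sigma mu gamma T _ _ _ balT leavesT.
have sizeT : size (leaves T) = N by rewrite (perm_size leavesT) size_enum_ord.
have N_gt0 := leaves_gt0 T; rewrite sizeT in N_gt0.
have time_le := hrp_ops_balanced balT; rewrite sizeT in time_le.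
rewrite /hrp_time /hrp_space /hrp_aux_space /hrp_run.
have := hrp_cost Sigma mu gamma T (CState 0 0 0).
case: (hrp Sigma mu gamma T _) => [res s] /= [_ -> _ peak_le].
rewrite sizeT in peak_le; split; nia.
Qed.
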